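(* Let $N\subset\mathbb{R}^3$ be an open set with coordinates $(t,x,y)$ and metric $g_f^{\varepsilon}=\varepsilon\,dx^2+f(x,y)\,dy^2+2\,dt\,dy$ ($\varepsilon=\pm1$, $f$ smooth), with orthonormal frame $$e_1=\partial_x,\quad e_2=\tfrac{2-f}{2\sqrt2}\partial_t+\tfrac1{\sqrt2}\partial_y,\quad e_3=\tfrac{2+f}{2\sqrt2}\partial_t-\tfrac1{\sqrt2}\partial_y.$$ Let $\Sigma\subset N$ be a non-degenerate totally umbilical surface with unit normal $\mathcal{V}=v_1e_1+v_2e_2+v_3e_3$, where $v_i\in C^\infty(\Sigma)$ and $\varepsilon v_1^2+v_2^2-v_3^2=\delta=\pm1$, and assume $v_1\neq0$ on $\Sigma$. Then $$v_3(v_2-v_3)^2f_{xxx}=0$$ on $\Sigma$. Hence at each point of $\Sigma$ there is a small neighbourhood in which one or more of $f_{xxx}=0$, $v_3=0$, $v_2=v_3$ must occur.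
   Context: $\langle e_1,e_1\rangle=\varepsilon$, $\langle e_2,e_2\rangle=1$, $\langle e_3,e_3\rangle=-1$. A surface is non-degenerate if its induced metric is Riemannian or Lorentzian. With $\overline{\nabla}$ the Levi-Civita connection of $g_f^\varepsilon$, $\Sigma$ is totally umbilical if there is $\lambda\in C^\infty(\Sigma)$ with $-\overline{\nabla}_T\mathcal{V}=\lambda T$ for all $T$ tangent to $\Sigma$. Here $f_{xxx}$ is evaluated at the points of $\Sigma$. *)

From Stdlib Require Import Reals List.
From Coquelicot Require Import Coquelicot.
Open Scope R_scope.

(* iterated partial derivative: [true] = d/d(first var), [false] = d/d(second var);
   the head of the list is the last derivative applied *)
Fixpoint pd (l : list bool) (h : R -> R -> R) : R -> R -> R :=
  match l with
  | nil => h
  | b :: l' =>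
      let g := pd l' h in
      if b then (fun a c => Derive (fun s => g s c) a)
      else (fun a c => Derive (fun s => g a s) c)
  end.

Definition open2 (D : R -> R -> Prop) : Prop :=
  open (fun p : R * R => D (fst p) (snd p)).

Definition smooth_on (D : R -> R -> Prop) (h : R -> R -> R) : Prop :=
  forall (l : list bool) (a c : R), D a c ->
    ex_derive (fun s => pd l h s c) a /\
    ex_derive (fun s => pd l h a s) c /\
    continuous (fun p : R * R => pd l h (fst p) (snd p)) (a, c).

(* coordinates indexed 0 = t, 1 = x, 2 = y *)

Definition sum3 (F : nat -> R) : R := F 0%nat + F 1%nat + F 2%nat.

Definition gmet (eps : R) (f : R -> R -> R) (i j : nat) (t x y : R) : R :=
  match i, j with
  | 0%nat, 2%nat => 1
  | 2%nat, 0%nat => 1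
  | 1%nat, 1%nat => eps
  | 2%nat, 2%nat => f x y
  | _, _ => 0
  end.

Definition ginv (eps : R) (f : R -> R -> R) (k l : nat) (t x y : R) : R :=
  match k, l with
  | 0%nat, 0%nat => - f x y
  | 0%nat, 2%nat => 1
  | 2%nat, 0%nat => 1
  | 1%nat, 1%nat => / eps
  | _, _ => 0
  end.

Definition dmet (eps : R) (f : R -> R -> R) (l i j : nat) (t x y : R) : R :=
  match l with
  | 0%nat => Derive (fun s => gmet eps f i j s x y) t
  | 1%nat => Derive (fun s => gmet eps f i j t s y) x
  | _ => Derive (fun s => gmet eps f i j t x s) y
  end.

Definition Christ (eps : R) (f : R -> R -> R) (k i j : nat) (t x y : R) : R :=
  / 2 * sum3 (fun l => ginv eps f k l t x y *
     (dmet eps f i j l t x y + dmet eps f j i l t x y - dmet eps f l i j t x y)).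

(* coordinate components (k = t,x,y) of the orthonormal frame e_1,e_2,e_3
   (indexed a = 0,1,2) *)
Definition efr (f : R -> R -> R) (a k : nat) (t x y : R) : R :=
  match a, k with
  | 0%nat, 1%nat => 1
  | 1%nat, 0%nat => (2 - f x y) / (2 * sqrt 2)
  | 1%nat, 2%nat => / sqrt 2
  | 2%nat, 0%nat => (2 + f x y) / (2 * sqrt 2)
  | 2%nat, 2%nat => - / sqrt 2
  | _, _ => 0
  end.

(* X k u w = k-th coordinate of the point with parameters (u,w) *)

Definition Xu (X : nat -> R -> R -> R) (k : nat) (u w : R) : R :=
  Derive (fun s => X k s w) u.
Definition Xw (X : nat -> R -> R -> R) (k : nat) (u w : R) : R :=
  Derive (fun s => X k u s) w.

Definition gX (eps : R) (f : R -> R -> R) (X : nat -> R -> R -> R)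
  (u w : R) (A B : nat -> R) : R :=
  sum3 (fun i => sum3 (fun j =>
     gmet eps f i j (X 0%nat u w) (X 1%nat u w) (X 2%nat u w) * A i * B j)).

Definition Vc (f : R -> R -> R) (X : nat -> R -> R -> R) (v : nat -> R -> R -> R)
  (k : nat) (u w : R) : R :=
  sum3 (fun a => v a u w * efr f a k (X 0%nat u w) (X 1%nat u w) (X 2%nat u w)).

Definition nablaU (eps : R) (f : R -> R -> R) (X v : nat -> R -> R -> R)
  (k : nat) (u w : R) : R :=
  Derive (fun s => Vc f X v k s w) u +
  sum3 (fun i => sum3 (fun j =>
    Christ eps f k i j (X 0%nat u w) (X 1%nat u w) (X 2%nat u w) *
    Xu X i u w * Vc f X v j u w)).

Definition nablaW (eps : R) (f : R -> R -> R) (X v : nat -> R -> R -> R)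
  (k : nat) (u w : R) : R :=
  Derive (fun s => Vc f X v k u s) w +
  sum3 (fun i => sum3 (fun j =>
    Christ eps f k i j (X 0%nat u w) (X 1%nat u w) (X 2%nat u w) *
    Xw X i u w * Vc f X v j u w)).

(* Along a patch (u, w) |-> X(u, w) of the surface, the only Christoffel symbols that
   enter the y- and x-components of the umbilicity equation are Gamma^y = 0 and
   Gamma^x_yy = - f_x / (2 eps).  With phi = (v_2 - v_3) / sqrt 2 the y-component of the
   normal, these components read  d phi = - lam dy  and  d v_1 = - lam dx + (f_x phi / 2 eps) dy.
   Applying d once more gives  d lam /\ dy = 0  and  d lam /\ dx = (phi f_xx / 2 eps) dx /\ dy.
   Where dx /\ dy <> 0 this forces d lam = - (phi f_xx / 2 eps) dy near the point, and
   d (d lam) = 0 then yields phi f_xxx = 0.  Where dx /\ dy = 0, the normal can only be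
   orthogonal to the (immersed) tangent plane if phi = 0.  So (v_2 - v_3) f_xxx = 0 on the
   whole patch. *)

From Stdlib Require Import Reals List Lra.
From Coquelicot Require Import Coquelicot.
Open Scope R_scope.

Definition du (g : R -> R -> R) (a c : R) : R := Derive (fun s => g s c) a.
Definition dw (g : R -> R -> R) (a c : R) : R := Derive (fun s => g a s) c.

Definition jac (g h : R -> R -> R) (a c : R) : R :=
  du g a c * dw h a c - dw g a c * du h a c.

Definition ex_partials (g : R -> R -> R) (a c : R) : Prop :=
  ex_derive (fun s => g s c) a /\ ex_derive (fun s => g a s) c.

Lemma pd_app (l l' : list bool) (h : R -> R -> R) : pd (l ++ l') h = pd l (pd l' h).
Proof. induction l as [|b l IH]; simpl; [reflexivity | now rewrite IH]. Qed.

Section SmoothOn.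

Variable D : R -> R -> Prop.

Lemma smooth_on_pd (l : list bool) (h : R -> R -> R) : smooth_on D h -> smooth_on D (pd l h).
Proof. intros Sh l' a c Hac. rewrite <- pd_app. now apply Sh. Qed.

Lemma smooth_on_du (h : R -> R -> R) : smooth_on D h -> smooth_on D (du h).
Proof. exact (smooth_on_pd (true :: nil) h). Qed.

Lemma smooth_on_dw (h : R -> R -> R) : smooth_on D h -> smooth_on D (dw h).
Proof. exact (smooth_on_pd (false :: nil) h). Qed.

Lemma smooth_on_ex_partials (h : R -> R -> R) (a c : R) :
  smooth_on D h -> D a c -> ex_partials h a c.
Proof. intros Sh Hac. destruct (Sh nil a c Hac) as [Hu [Hw _]]. now split. Qed.

Lemma smooth_on_continuity (h : R -> R -> R) (a c : R) :
  smooth_on D h -> D a c -> continuity_2d_pt h a c.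
Proof. intros Sh Hac. apply continuity_2d_pt_filterlim, (Sh nil a c Hac). Qed.

Lemma smooth_on_ex_diff_n (n : nat) (h : R -> R -> R) (a c : R) :
  smooth_on D h -> D a c -> ex_diff_n h n a c.
Proof.
  revert h. induction n as [|n IH]; intros h Sh Hac; simpl.
  - split; [now apply smooth_on_continuity | exact I].
  - destruct (smooth_on_ex_partials h a c Sh Hac) as [Hu Hw].
    repeat split; auto using smooth_on_continuity.
    + apply (IH (du h)); auto using smooth_on_du.
    + apply (IH (dw h)); auto using smooth_on_dw.
Qed.

Hypothesis HD : open2 D.

Lemma open2_locally_2d (a c : R) : D a c -> locally_2d D a c.
Proof. intros Hac. apply locally_2d_locally, (HD (a, c)), Hac. Qed.

Lemma smooth_on_du_dw (h : R -> R -> R) (a c : R) :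
  smooth_on D h -> D a c -> du (dw h) a c = dw (du h) a c.
Proof.
  intros Sh Hac. apply Schwarz.
  - apply (locally_2d_impl D); [apply locally_2d_forall | now apply open2_locally_2d].
    intros s t Hst.
    destruct (smooth_on_ex_partials h s t Sh Hst) as [Hu Hw].
    destruct (smooth_on_ex_partials (dw h) s t (smooth_on_dw h Sh) Hst) as [Hwu _].
    destruct (smooth_on_ex_partials (du h) s t (smooth_on_du h Sh) Hst) as [_ Huw].
    tauto.
  - apply (smooth_on_continuity (du (dw h))); auto using smooth_on_du, smooth_on_dw.
  - apply (smooth_on_continuity (dw (du h))); auto using smooth_on_du, smooth_on_dw.
Qed.

(* A first-order Taylor bound [|h(p) - T_1 h(p)| <= C |p - p0|^2] makes the
   remainder [o(|p - p0|)]. *)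
Lemma smooth_on_differentiable (h : R -> R -> R) (a c : R) :
  smooth_on D h -> D a c -> differentiable_pt_lim h a c (du h a c) (dw h a c).
Proof.
  intros Sh Hac.
  destruct (Taylor_Lagrange_2d h 1 a c) as [C HC].
  { apply (locally_2d_impl D); [apply locally_2d_forall | now apply open2_locally_2d].
    intros s t Hst. now apply smooth_on_ex_diff_n. }
  intros eps.
  assert (Hr : 0 < eps / (Rabs C + 1)).
  { apply Rdiv_lt_0_compat; [apply cond_pos | pose proof (Rabs_pos C); lra]. }
  apply (locally_2d_impl (fun s t =>
     Rabs (h s t - DL_pol 1 h a c (s - a) (t - c)) <=
     C * Rmax (Rabs (s - a)) (Rabs (t - c)) ^ 2 /\
     Rmax (Rabs (s - a)) (Rabs (t - c)) < eps / (Rabs C + 1))).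
  2:{ apply locally_2d_and; [exact HC |].
      exists (mkposreal _ Hr). intros s t Hs Ht. now apply Rmax_lub_lt. }
  apply locally_2d_forall. intros s t [Hdl HM].
  assert (E : DL_pol 1 h a c (s - a) (t - c) =
              h a c + (du h a c * (s - a) + dw h a c * (t - c))).
  { unfold DL_pol, differential; simpl. unfold partial_derive; simpl.
    unfold Binomial.C, du, dw; simpl. field. }
  rewrite E in Hdl.
  set (M := Rmax (Rabs (s - a)) (Rabs (t - c))) in *.
  assert (HM0 : 0 <= M) by (eapply Rle_trans; [apply Rabs_pos | apply Rmax_l]).
  assert (HCM : Rabs C * M <= eps).
  { pose proof (Rabs_pos C).
    assert (eps / (Rabs C + 1) * (Rabs C + 1) = eps) by (field; lra).
    nra. }
  assert (C * M ^ 2 <= Rabs C * M * M) by (pose proof (Rle_abs C); simpl; nra).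
  replace (h s t - h a c - (du h a c * (s - a) + dw h a c * (t - c)))
    with (h s t - (h a c + (du h a c * (s - a) + dw h a c * (t - c)))) by ring.
  nra.
Qed.

Section LinComb.

Variables (h g1 g2 : R -> R -> R) (al be : R).
Hypotheses (Hh : forall a c, D a c -> h a c = al * g1 a c + be * g2 a c)
  (Sg1 : smooth_on D g1) (Sg2 : smooth_on D g2).

Lemma pd_lincomb (l : list bool) (a c : R) :
  D a c -> pd l h a c = al * pd l g1 a c + be * pd l g2 a c.
Proof.
  revert a c. induction l as [|b l IH]; intros a c Hac; [now apply Hh |].
  destruct (Sg1 l a c Hac) as [G1u [G1w _]]. destruct (Sg2 l a c Hac) as [G2u [G2w _]].
  destruct b; simpl.
  - rewrite (Derive_ext_loc _ (fun s => al * pd l g1 s c + be * pd l g2 s c)).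
    + rewrite Derive_plus, !Derive_scal; auto using ex_derive_scal.
    + apply (filter_imp (fun s => D s c)); [intros s Hs; now apply IH |].
      now apply locally_2d_1d_const_y, open2_locally_2d.
  - rewrite (Derive_ext_loc _ (fun s => al * pd l g1 a s + be * pd l g2 a s)).
    + rewrite Derive_plus, !Derive_scal; auto using ex_derive_scal.
    + apply (filter_imp (fun s => D a s)); [intros s Hs; now apply IH |].
      now apply locally_2d_1d_const_x, open2_locally_2d.
Qed.

Lemma smooth_on_lincomb : smooth_on D h.
Proof.
  intros l a c Hac.
  assert (Loc : locally_2d (fun s t => al * pd l g1 s t + be * pd l g2 s t = pd l h s t) a c).
  { apply (locally_2d_impl D); [apply locally_2d_forall | now apply open2_locally_2d].
    intros s t Hst. symmetry. now apply pd_lincomb. }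
  destruct (Sg1 l a c Hac) as [G1u [G1w _]]. destruct (Sg2 l a c Hac) as [G2u [G2w _]].
  split; [| split].
  - apply (ex_derive_ext_loc (fun s => al * pd l g1 s c + be * pd l g2 s c)).
    + generalize (locally_2d_1d_const_y _ _ _ Loc). now apply filter_imp.
    + auto_derive; auto.
  - apply (ex_derive_ext_loc (fun s => al * pd l g1 a s + be * pd l g2 a s)).
    + generalize (locally_2d_1d_const_x _ _ _ Loc). now apply filter_imp.
    + auto_derive; auto.
  - apply continuity_2d_pt_filterlim, (continuity_2d_pt_ext_loc _ _ _ _ Loc).
    apply continuity_2d_pt_plus; apply continuity_2d_pt_mult;
      auto using continuity_2d_pt_const, smooth_on_continuity, smooth_on_pd.
Qed.

End LinComb.

End SmoothOn.

Section JacobianCalculus.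

Variables (a c : R).

Lemma ex_partials_opp (p : R -> R -> R) :
  ex_partials p a c -> ex_partials (fun s t => - p s t) a c.
Proof. intros [Hu Hw]. split; auto_derive; auto. Qed.

Lemma ex_partials_scal (K : R) (p : R -> R -> R) :
  ex_partials p a c -> ex_partials (fun s t => K * p s t) a c.
Proof. intros [Hu Hw]. split; auto_derive; auto. Qed.

Lemma ex_partials_mul (p q : R -> R -> R) :
  ex_partials p a c -> ex_partials q a c -> ex_partials (fun s t => p s t * q s t) a c.
Proof. intros [Hpu Hpw] [Hqu Hqw]. split; auto_derive; auto. Qed.

Lemma jac_diag (h : R -> R -> R) : jac h h a c = 0.
Proof. unfold jac. ring. Qed.

Lemma jac_opp (p k : R -> R -> R) : jac (fun s t => - p s t) k a c = - jac p k a c.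
Proof. unfold jac, du, dw. rewrite (Derive_opp (fun s => p s c)), (Derive_opp (fun s => p a s)). ring. Qed.

Lemma jac_scal (K : R) (p k : R -> R -> R) :
  jac (fun s t => K * p s t) k a c = K * jac p k a c.
Proof. unfold jac, du, dw. rewrite (Derive_scal (fun s => p s c)), (Derive_scal (fun s => p a s)). ring. Qed.

Lemma jac_mul (p q k : R -> R -> R) :
  ex_partials p a c -> ex_partials q a c ->
  jac (fun s t => p s t * q s t) k a c = p a c * jac q k a c + q a c * jac p k a c.
Proof.
  intros [Hpu Hpw] [Hqu Hqw]. unfold jac, du, dw.
  rewrite (Derive_mult (fun s => p s c) (fun s => q s c)),
          (Derive_mult (fun s => p a s) (fun s => q a s)); auto. ring.
Qed.

Section Composition.

Variables (F x y : R -> R -> R).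
Hypotheses (HF : differentiable_pt_lim F (x a c) (y a c)
                   (du F (x a c) (y a c)) (dw F (x a c) (y a c)))
  (Hx : ex_partials x a c) (Hy : ex_partials y a c).

Lemma is_derive_comp_du :
  is_derive (fun s => F (x s c) (y s c)) a
    (du F (x a c) (y a c) * du x a c + dw F (x a c) (y a c) * du y a c).
Proof.
  destruct Hx as [Hxu _]. destruct Hy as [Hyu _].
  apply is_derive_Reals, derivable_pt_lim_comp_2d; [exact HF | |];
    apply is_derive_Reals, Derive_correct; assumption.
Qed.

Lemma is_derive_comp_dw :
  is_derive (fun s => F (x a s) (y a s)) c
    (du F (x a c) (y a c) * dw x a c + dw F (x a c) (y a c) * dw y a c).
Proof.
  destruct Hx as [_ Hxw]. destruct Hy as [_ Hyw].
  apply is_derive_Reals, derivable_pt_lim_comp_2d; [exact HF | |];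
    apply is_derive_Reals, Derive_correct; assumption.
Qed.

Lemma ex_partials_comp : ex_partials (fun s t => F (x s t) (y s t)) a c.
Proof.
  split; eexists; [apply is_derive_comp_du | apply is_derive_comp_dw].
Qed.

Lemma jac_comp (k : R -> R -> R) :
  jac (fun s t => F (x s t) (y s t)) k a c =
  du F (x a c) (y a c) * jac x k a c + dw F (x a c) (y a c) * jac y k a c.
Proof.
  unfold jac at 1.
  replace (du (fun s t => F (x s t) (y s t)) a c) with (du F (x a c) (y a c) * du x a c + dw F (x a c) (y a c) * du y a c)
    by (symmetry; apply is_derive_unique, is_derive_comp_du).
  replace (dw (fun s t => F (x s t) (y s t)) a c) with (du F (x a c) (y a c) * dw x a c + dw F (x a c) (y a c) * dw y a c)
    by (symmetry; apply is_derive_unique, is_derive_comp_dw).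
  unfold jac. ring.
Qed.

End Composition.

End JacobianCalculus.

(* [d g = al dh + be dk] forces [d al /\ dh + d be /\ dk = d (d g) = 0]. *)
Lemma jac_closed (U : R -> R -> Prop) (g al h be k : R -> R -> R) (u w : R) :
  open2 U -> smooth_on U g -> smooth_on U h -> smooth_on U k -> U u w ->
  ex_partials al u w -> ex_partials be u w ->
  locally_2d (fun a c =>
    du g a c = al a c * du h a c + be a c * du k a c /\
    dw g a c = al a c * dw h a c + be a c * dw k a c) u w ->
  jac al h u w + jac be k u w = 0.
Proof.
  intros HU Sg Sh Sk Huw [Halu Halw] [Hbeu Hbew] Hdg.
  destruct (smooth_on_ex_partials U (dw h) u w (smooth_on_dw U h Sh) Huw) as [Hhwu _].
  destruct (smooth_on_ex_partials U (du h) u w (smooth_on_du U h Sh) Huw) as [_ Hhuw].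
  destruct (smooth_on_ex_partials U (dw k) u w (smooth_on_dw U k Sk) Huw) as [Hkwu _].
  destruct (smooth_on_ex_partials U (du k) u w (smooth_on_du U k Sk) Huw) as [_ Hkuw].
  assert (Eu : du (dw g) u w = du al u w * dw h u w + al u w * du (dw h) u w
                             + (du be u w * dw k u w + be u w * du (dw k) u w)).
  { unfold du at 1.
    rewrite (Derive_ext_loc _ (fun s => al s w * dw h s w + be s w * dw k s w)).
    - rewrite Derive_plus, !Derive_mult; auto using ex_derive_mult.
    - generalize (locally_2d_1d_const_y _ _ _ Hdg). apply filter_imp. tauto. }
  assert (Ew : dw (du g) u w = dw al u w * du h u w + al u w * dw (du h) u w
                             + (dw be u w * du k u w + be u w * dw (du k) u w)).
  { unfold dw at 1.
    rewrite (Derive_ext_loc _ (fun s => al u s * du h u s + be u s * du k u s)).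
    - rewrite Derive_plus, !Derive_mult; auto using ex_derive_mult.
    - generalize (locally_2d_1d_const_x _ _ _ Hdg). apply filter_imp. tauto. }
  pose proof (smooth_on_du_dw U HU g u w Sg Huw) as Schg.
  rewrite (smooth_on_du_dw U HU h u w Sh Huw) in Eu.
  rewrite (smooth_on_du_dw U HU k u w Sk Huw) in Eu.
  unfold jac. lra.
Qed.

Lemma jac_closed1 (U : R -> R -> Prop) (g al h : R -> R -> R) (u w : R) :
  open2 U -> smooth_on U g -> smooth_on U h -> U u w -> ex_partials al u w ->
  locally_2d (fun a c =>
    du g a c = al a c * du h a c /\ dw g a c = al a c * dw h a c) u w ->
  jac al h u w = 0.
Proof.
  intros HU Sg Sh Huw Hal Hdg.
  assert (H0 : jac (fun _ _ => 0) h u w = 0).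
  { unfold jac, du, dw. rewrite !Derive_const. ring. }
  rewrite <- (Rplus_0_r (jac al h u w)), <- H0 at 1.
  apply (jac_closed U g); auto.
  - split; apply ex_derive_const.
  - generalize Hdg. apply locally_2d_impl, locally_2d_forall.
    intros s t [Eu Ew]. split; lra.
Qed.

Lemma partials_of_jac (l x y : R -> R -> R) (cc a c : R) :
  jac l y a c = 0 -> jac l x a c = cc * jac x y a c -> jac x y a c <> 0 ->
  du l a c = - cc * du y a c /\ dw l a c = - cc * dw y a c.
Proof.
  intros Hy Hx HJ. unfold jac in *.
  split; apply (Rmult_eq_reg_l (du x a c * dw y a c - dw x a c * du y a c)); auto.
  - replace (_ * du l a c) with
      (du x a c * (du l a c * dw y a c - dw l a c * du y a c)
       - du y a c * (du l a c * dw x a c - dw l a c * du x a c)) by ring.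
    rewrite Hy, Hx. ring.
  - replace (_ * dw l a c) with
      (dw x a c * (du l a c * dw y a c - dw l a c * du y a c)
       - dw y a c * (du l a c * dw x a c - dw l a c * du x a c)) by ring.
    rewrite Hy, Hx. ring.
Qed.

Lemma continuity_jac (U : R -> R -> Prop) (g h : R -> R -> R) (a c : R) :
  smooth_on U g -> smooth_on U h -> U a c -> continuity_2d_pt (jac g h) a c.
Proof.
  intros Sg Sh Hac. unfold jac.
  apply continuity_2d_pt_minus; apply continuity_2d_pt_mult;
    apply (smooth_on_continuity U); auto using smooth_on_du, smooth_on_dw.
Qed.

(* Since [g^{xk} = 0] for [k <> x] and [g^{yk} = 0] for [k <> t], the only nonzero
   Christoffel symbol with upper index [x] or [y] is [Gamma^x_yy = - f_x / (2 eps)]. *)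
Lemma nablaU_y (eps : R) (f : R -> R -> R) (X v : nat -> R -> R -> R) (u w : R) :
  nablaU eps f X v 2 u w = du (Vc f X v 2) u w.
Proof. unfold nablaU, Christ, sum3, ginv, dmet, gmet, du; simpl. rewrite !Derive_const. ring. Qed.

Lemma nablaW_y (eps : R) (f : R -> R -> R) (X v : nat -> R -> R -> R) (u w : R) :
  nablaW eps f X v 2 u w = dw (Vc f X v 2) u w.
Proof. unfold nablaW, Christ, sum3, ginv, dmet, gmet, dw; simpl. rewrite !Derive_const. ring. Qed.

Lemma nablaU_x (eps : R) (f : R -> R -> R) (X v : nat -> R -> R -> R) (u w : R) :
  eps <> 0 ->
  nablaU eps f X v 1 u w = du (Vc f X v 1) u w
    - / (2 * eps) * du f (X 1%nat u w) (X 2%nat u w) * Vc f X v 2 u w * du (X 2%nat) u w.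
Proof.
  intros He. unfold nablaU, Christ, sum3, ginv, dmet, gmet; simpl.
  rewrite !Derive_const. unfold du, Xu. field. exact He.
Qed.

Lemma nablaW_x (eps : R) (f : R -> R -> R) (X v : nat -> R -> R -> R) (u w : R) :
  eps <> 0 ->
  nablaW eps f X v 1 u w = dw (Vc f X v 1) u w
    - / (2 * eps) * du f (X 1%nat u w) (X 2%nat u w) * Vc f X v 2 u w * dw (X 2%nat) u w.
Proof.
  intros He. unfold nablaW, Christ, sum3, ginv, dmet, gmet; simpl.
  rewrite !Derive_const. unfold du, dw, Xw. field. exact He.
Qed.

Lemma Vc_x (f : R -> R -> R) (X v : nat -> R -> R -> R) (u w : R) :
  Vc f X v 1 u w = v 0%nat u w.
Proof. unfold Vc, sum3, efr; simpl. ring. Qed.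

Lemma Vc_y (f : R -> R -> R) (X v : nat -> R -> R -> R) (u w : R) :
  Vc f X v 2 u w = / sqrt 2 * v 1%nat u w + - / sqrt 2 * v 2%nat u w.
Proof. unfold Vc, sum3, efr; simpl. ring. Qed.

Lemma gX_expand (eps : R) (f : R -> R -> R) (X : nat -> R -> R -> R) (u w : R) (A B : nat -> R) :
  gX eps f X u w A B =
  A 0%nat * B 2%nat + A 2%nat * B 0%nat + eps * A 1%nat * B 1%nat
  + f (X 1%nat u w) (X 2%nat u w) * A 2%nat * B 2%nat.
Proof. unfold gX, sum3, gmet; simpl. ring. Qed.

(* A nonzero [y]-component of a normal makes [dt] a combination of [dx] and [dy] on
   the tangent plane, so [dx /\ dy = 0] there would kill all three minors. *)
Lemma orthogonal_y_eq0 (e F b0 b1 b2 t1 x1 y1 t2 x2 y2 : R) :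
  b0 * y1 + b2 * t1 + e * b1 * x1 + F * b2 * y1 = 0 ->
  b0 * y2 + b2 * t2 + e * b1 * x2 + F * b2 * y2 = 0 ->
  x1 * y2 - x2 * y1 = 0 ->
  x1 * y2 - y1 * x2 <> 0 \/ y1 * t2 - t1 * y2 <> 0 \/ t1 * x2 - x1 * t2 <> 0 ->
  b2 = 0.
Proof.
  intros N1 N2 HJ Himm.
  assert (Ety : b2 * (y1 * t2 - t1 * y2) = 0).
  { replace (b2 * (y1 * t2 - t1 * y2)) with
      (y1 * (b0 * y2 + b2 * t2 + e * b1 * x2 + F * b2 * y2)
       - y2 * (b0 * y1 + b2 * t1 + e * b1 * x1 + F * b2 * y1)
       + e * b1 * (x1 * y2 - x2 * y1)) by ring.
    rewrite N1, N2, HJ. ring. }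
  assert (Etx : b2 * (t1 * x2 - x1 * t2) = 0).
  { replace (b2 * (t1 * x2 - x1 * t2)) with
      (x2 * (b0 * y1 + b2 * t1 + e * b1 * x1 + F * b2 * y1)
       - x1 * (b0 * y2 + b2 * t2 + e * b1 * x2 + F * b2 * y2)
       + (b0 + F * b2) * (x1 * y2 - x2 * y1)) by ring.
    rewrite N1, N2, HJ. ring. }
  apply Rmult_integral in Ety. apply Rmult_integral in Etx.
  destruct Ety as [|Ety]; [assumption|]. destruct Etx as [|Etx]; [assumption|].
  exfalso. destruct Himm as [I | [I | I]]; apply I; lra.
Qed.

Section UmbilicalSurface.

Variables (eps : R) (f : R -> R -> R) (D U : R -> R -> Prop)
  (X v : nat -> R -> R -> R) (lam : R -> R -> R).
Hypotheses (Heps : eps <> 0) (HD : open2 D) (Sf : smooth_on D f) (HU : open2 U)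
  (SX : forall k, (k < 3)%nat -> smooth_on U (X k))
  (HXD : forall u w, U u w -> D (X 1%nat u w) (X 2%nat u w))
  (Sv : forall a, (a < 3)%nat -> smooth_on U (v a))
  (Sl : smooth_on U lam)
  (Humb : forall u w a b k, U u w -> (k < 3)%nat ->
     - (a * nablaU eps f X v k u w + b * nablaW eps f X v k u w) =
     lam u w * (a * Xu X k u w + b * Xw X k u w)).

Local Notation x := (X 1%nat).
Local Notation y := (X 2%nat).
Local Notation phi := (Vc f X v 2).

Let Sx : smooth_on U x := SX 1 ltac:(auto).
Let Sy : smooth_on U y := SX 2 ltac:(auto).

Lemma smooth_on_phi : smooth_on U phi.
Proof.
  apply (smooth_on_lincomb U HU phi (v 1%nat) (v 2%nat) (/ sqrt 2) (- / sqrt 2)); auto.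
  intros a c _. apply Vc_y.
Qed.

Lemma umbilic_y (a c : R) : U a c ->
  du phi a c = - lam a c * du y a c /\ dw phi a c = - lam a c * dw y a c.
Proof.
  intros Hac.
  pose proof (Humb a c 1 0 2 Hac ltac:(auto)) as Hu. rewrite nablaU_y in Hu.
  pose proof (Humb a c 0 1 2 Hac ltac:(auto)) as Hw. rewrite nablaW_y in Hw.
  unfold Xu, Xw, du, dw in *. split; lra.
Qed.

Lemma umbilic_x (a c : R) : U a c ->
  du (v 0%nat) a c = - lam a c * du x a c
                     + / (2 * eps) * (du f (x a c) (y a c) * phi a c) * du y a c /\
  dw (v 0%nat) a c = - lam a c * dw x a c
                     + / (2 * eps) * (du f (x a c) (y a c) * phi a c) * dw y a c.
Proof.
  intros Hac.
  pose proof (Humb a c 1 0 1 Hac ltac:(auto)) as Hu. rewrite nablaU_x in Hu by exact Heps.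
  pose proof (Humb a c 0 1 1 Hac ltac:(auto)) as Hw. rewrite nablaW_x in Hw by exact Heps.
  unfold Xu, Xw, du, dw in *.
  rewrite (Derive_ext _ (fun s => v 0%nat s c)) in Hu by (intro; apply Vc_x).
  rewrite (Derive_ext _ (fun s => v 0%nat a s)) in Hw by (intro; apply Vc_x).
  split; lra.
Qed.

Lemma jac_phi_y (a c : R) : U a c -> jac phi y a c = 0.
Proof. intros Hac. unfold jac. destruct (umbilic_y a c Hac) as [-> ->]. ring. Qed.

Lemma jac_lam_y (a c : R) : U a c -> jac lam y a c = 0.
Proof.
  intros Hac.
  assert (H : jac (fun s t => - lam s t) y a c = 0).
  { apply (jac_closed1 U phi); auto using smooth_on_phi.
    - apply ex_partials_opp, (smooth_on_ex_partials U); auto.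
    - apply (locally_2d_impl U); [| now apply open2_locally_2d].
      apply locally_2d_forall. exact umbilic_y. }
  rewrite jac_opp in H. lra.
Qed.

Lemma differentiable_along (F : R -> R -> R) (a c : R) : smooth_on D F -> U a c ->
  differentiable_pt_lim F (x a c) (y a c) (du F (x a c) (y a c)) (dw F (x a c) (y a c)).
Proof. intros SF Hac. apply (smooth_on_differentiable D); auto. Qed.

Lemma ex_partials_along (F : R -> R -> R) (a c : R) : smooth_on D F -> U a c ->
  ex_partials (fun s t => F (x s t) (y s t)) a c.
Proof.
  intros SF Hac. apply ex_partials_comp; [now apply differentiable_along | |];
    now apply (smooth_on_ex_partials U).
Qed.

Lemma jac_along (F k : R -> R -> R) (a c : R) : smooth_on D F -> U a c ->
  jac (fun s t => F (x s t) (y s t)) k a c =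
  du F (x a c) (y a c) * jac x k a c + dw F (x a c) (y a c) * jac y k a c.
Proof.
  intros SF Hac. apply jac_comp; [now apply differentiable_along | |];
    now apply (smooth_on_ex_partials U).
Qed.

Lemma jac_lam_x (a c : R) : U a c ->
  jac lam x a c = / (2 * eps) * (phi a c * du (du f) (x a c) (y a c)) * jac x y a c.
Proof.
  intros Hac.
  assert (Sfx : smooth_on D (du f)) by now apply smooth_on_du.
  assert (Hphi : ex_partials phi a c) by (apply (smooth_on_ex_partials U); auto using smooth_on_phi).
  assert (H : jac (fun s t => - lam s t) x a c
              + jac (fun s t => / (2 * eps) * (du f (x s t) (y s t) * phi s t)) y a c = 0).
  { apply (jac_closed U (v 0%nat)); auto.
    - apply ex_partials_opp, (smooth_on_ex_partials U); auto.
    - apply ex_partials_scal, ex_partials_mul; auto using ex_partials_along.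
    - apply (locally_2d_impl U); [| now apply open2_locally_2d].
      apply locally_2d_forall. exact umbilic_x. }
  rewrite jac_opp, jac_scal, jac_mul, jac_along, jac_phi_y, jac_diag in H;
    auto using ex_partials_along.
  lra.
Qed.

Lemma phi_fxxx_of_jac_neq0 (a c : R) : U a c -> jac x y a c <> 0 ->
  phi a c * du (du (du f)) (x a c) (y a c) = 0.
Proof.
  intros Hac HJ.
  assert (Sfxx : smooth_on D (du (du f))) by now do 2 apply smooth_on_du.
  assert (Hphi : ex_partials phi a c) by (apply (smooth_on_ex_partials U); auto using smooth_on_phi).
  set (cc := fun s t => / (2 * eps) * (phi s t * du (du f) (x s t) (y s t))).
  assert (H : jac (fun s t => - cc s t) y a c = 0).
  { apply (jac_closed1 U lam); auto.
    - apply ex_partials_opp, ex_partials_scal, ex_partials_mul; auto using ex_partials_along.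
    - apply (locally_2d_impl (fun s t => U s t /\ jac x y s t <> 0)).
      + apply locally_2d_forall. intros s t [Hst HJst].
        apply (partials_of_jac lam x y (cc s t)); auto using jac_lam_y, jac_lam_x.
      + apply locally_2d_and; [now apply open2_locally_2d |].
        apply continuity_2d_pt_neq_0; [apply (continuity_jac U) |]; auto. }
  unfold cc in H.
  rewrite jac_opp, jac_scal, jac_mul, jac_along, jac_phi_y, !jac_diag in H;
    auto using ex_partials_along.
  assert (HK : / (2 * eps) <> 0) by (apply Rinv_neq_0_compat; lra).
  apply (Rmult_eq_reg_l (/ (2 * eps) * jac x y a c)); [| now apply Rmult_integral_contrapositive].
  lra.
Qed.

End UmbilicalSurface.

Theorem mainTheorem3
  (eps delta : R) (f : R -> R -> R) (D : R -> R -> Prop)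
  (U : R -> R -> Prop) (X v : nat -> R -> R -> R) (lam : R -> R -> R) :
  (eps = 1 \/ eps = -1) ->
  (delta = 1 \/ delta = -1) ->
  (* f smooth on the open set D of the (x,y)-plane; N = R x D *)
  open2 D -> smooth_on D f ->
  (* Sigma: a smooth immersed surface patch X : U -> N *)
  open2 U ->
  (forall k, (k < 3)%nat -> smooth_on U (X k)) ->
  (forall u w, U u w -> D (X 1%nat u w) (X 2%nat u w)) ->
  (forall u w, U u w ->
     (Xu X 1%nat u w * Xw X 2%nat u w - Xu X 2%nat u w * Xw X 1%nat u w <> 0 \/
      Xu X 2%nat u w * Xw X 0%nat u w - Xu X 0%nat u w * Xw X 2%nat u w <> 0 \/
      Xu X 0%nat u w * Xw X 1%nat u w - Xu X 1%nat u w * Xw X 0%nat u w <> 0)) ->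
  (* non-degenerate: induced metric Riemannian or Lorentzian *)
  (forall u w, U u w ->
     gX eps f X u w (fun k => Xu X k u w) (fun k => Xu X k u w) *
     gX eps f X u w (fun k => Xw X k u w) (fun k => Xw X k u w) -
     gX eps f X u w (fun k => Xu X k u w) (fun k => Xw X k u w) ^ 2 <> 0) ->
  (* unit normal V = v_1 e_1 + v_2 e_2 + v_3 e_3 with smooth v_i *)
  (forall a, (a < 3)%nat -> smooth_on U (v a)) ->
  (forall u w, U u w ->
     gX eps f X u w (fun k => Vc f X v k u w) (fun k => Xu X k u w) = 0 /\
     gX eps f X u w (fun k => Vc f X v k u w) (fun k => Xw X k u w) = 0) ->
  (forall u w, U u w ->
     eps * v 0%nat u w ^ 2 + v 1%nat u w ^ 2 - v 2%nat u w ^ 2 = delta) ->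
  (forall u w, U u w -> v 0%nat u w <> 0) ->
  (* totally umbilical: -nabla_T V = lam T for every tangent T = a X_u + b X_w *)
  smooth_on U lam ->
  (forall u w a b k, U u w -> (k < 3)%nat ->
     - (a * nablaU eps f X v k u w + b * nablaW eps f X v k u w) =
     lam u w * (a * Xu X k u w + b * Xw X k u w)) ->
  forall u w, U u w ->
    v 2%nat u w * (v 1%nat u w - v 2%nat u w) ^ 2 *
    pd (true :: true :: true :: nil) f (X 1%nat u w) (X 2%nat u w) = 0.
Proof.
  intros Heps _ HD Sf HU SX HXD Himm _ Sv Hnorm _ _ Sl Humb u w Huw.
  assert (Hphi : Vc f X v 2 u w * du (du (du f)) (X 1%nat u w) (X 2%nat u w) = 0).
  { destruct (Req_dec (jac (X 1%nat) (X 2%nat) u w) 0) as [HJ | HJ].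
    - destruct (Hnorm u w Huw) as [N1 N2]. rewrite gX_expand in N1, N2.
      rewrite (orthogonal_y_eq0 _ _ _ _ _ _ _ _ _ _ _ N1 N2 HJ (Himm u w Huw)). ring.
    - apply (phi_fxxx_of_jac_neq0 eps f D U X v lam); auto. destruct Heps; lra. }
  assert (Hs2 : sqrt 2 <> 0) by (apply Rgt_not_eq, sqrt_lt_R0; lra).
  rewrite Vc_y in Hphi.
  change (pd _ f) with (du (du (du f))).
  replace (v 2%nat u w * (v 1%nat u w - v 2%nat u w) ^ 2 * du (du (du f)) (X 1%nat u w) (X 2%nat u w))
    with (v 2%nat u w * (v 1%nat u w - v 2%nat u w) * sqrt 2 *
          ((/ sqrt 2 * v 1%nat u w + - / sqrt 2 * v 2%nat u w) * du (du (du f)) (X 1%nat u w) (X 2%nat u w)))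
    by (field; exact Hs2).
  rewrite Hphi. ring.
Qed.
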